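(* Let $x\in V(D^+)\setminus\{s\}$ with $g^*(x)\neq\infty$, and let $y^*$ be a vertex with $g(x,y^* )=g^*(x)$. Then $(x,y^* )$ is valid, i.e. there exist a directed $sx$-path, a directed $y^*x$-path and a directed $y^*t$-path in $D^+$ which are mutually internally disjoint.
   Context: $G=(V,E,w)$ is a simple, connected, undirected graph with positive edge lengths, $s,t\in V$, $d(\cdot,\cdot)$ the shortest path distance in $G$. $D$ is the union of all shortest $st$-paths of $G$, and $D^+$ is the directed acyclic graph obtained from $D$ by orienting every edge toward $t$. $x\prec y$ means $x$ is an ancestor of $y$ in $D^+$ (a directed path of positive length from $x$ to $y$ exists). For $x\neq s$, $v\neq x$ is an $s$-dominator of $x$ if every directed path from $s$ to $x$ in $D^+$ contains $v$, and $I_s(x)$ is the $s$-dominator of $x$ closest to $x$ (every other $s$-dominator of $x$ is an $s$-dominator of $I_s(x)$). Symmetrically, for $x\neq t$, $v\neq x$ is a $t$-dominator of $x$ if every directed path from $x$ to $t$ in $D^+$ contains $v$, and $I_t(x)$ is the $t$-dominator closest to $x$. For $x\neq s$, $C(x)=\{v: I_s(x)\prec v\prec x\}$. For $x\neq s$ and $y\in V(D^+)$, $g(x,y)=d(y,x)$ if $y\in C(x)$ and $x\prec I_t(y)$, and $g(x,y)=\infty$ otherwise; $g^*(x)=\min_y g(x,y)$. Paths are internally disjoint if they share no vertex other than common endpoints. *)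

From HB Require Import structures.
From mathcomp Require Import all_boot all_order all_algebra.
From mathcomp Require Import classical_sets reals.

Set Implicit Arguments.
Unset Strict Implicit.
Unset Printing Implicit Defensive.

Import Order.TTheory GRing.Theory Num.Theory.
Local Open Scope ring_scope.
Local Open Scope classical_set_scope.

Section ShortestPathDAG.

Variable R : realType.
Variable V : finType.
Variable E : rel V.
Variable w : V -> V -> R.
Variables s t : V.

Definition weighted_graph : Prop :=
  [/\ irreflexive E, symmetric E, (forall u v, connect E u v),
      (forall u v, w u v = w v u) & (forall u v, E u v -> 0 < w u v)].

Fixpoint wlen (x : V) (p : seq V) : R :=
  if p is y :: p' then w x y + wlen y p' else 0.

Definition walk (x y : V) (p : seq V) : Prop := path E x p /\ last x p = y.

Definition dist (x y : V) : R :=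
  inf [set r | exists p, walk x y p /\ r = wlen x p].

Definition stpath (q : seq V) : Prop :=
  exists p, [/\ q = s :: p, walk s t p & wlen s p = dist s t].

(* V(D^+) : vertices of D (the union of all shortest st-paths) *)
Definition VD (v : V) : Prop := exists q1 q2, stpath (q1 ++ v :: q2).

(* arcs of D^+ : edges of D oriented towards t, i.e. (u,v) with u immediately
   followed by v on some shortest st-path *)
Definition arc (u v : V) : Prop := exists q1 q2, stpath (q1 ++ u :: v :: q2).

Fixpoint dwalk (a : V) (q : seq V) : Prop :=
  if q is b :: q' then arc a b /\ dwalk b q' else True.

Definition dpath (a b : V) (q : seq V) : Prop :=
  [/\ dwalk a q, last a q = b & uniq (a :: q)].

Definition prec (x y : V) : Prop := exists q, q != [::] /\ dpath x y q.

Definition sdom (x v : V) : Prop :=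
  v != x /\ forall q, dpath s x q -> v \in s :: q.

Definition tdom (x v : V) : Prop :=
  v != x /\ forall q, dpath x t q -> v \in x :: q.

Definition Is (x i : V) : Prop :=
  sdom x i /\ forall v, sdom x v -> v != i -> sdom i v.

Definition It (x i : V) : Prop :=
  tdom x i /\ forall v, tdom x v -> v != i -> tdom i v.

Definition Cset (x v : V) : Prop := exists i, Is x i /\ prec i v /\ prec v x.

(* g(x,y) is finite (then g(x,y) = d(y,x)) :
   y ∈ V(D^+), y ∈ C(x) and x ≺ I_t(y) *)
Definition gfinite (x y : V) : Prop :=
  [/\ VD y, Cset x y & exists j, It y j /\ prec x j].

Definition ends (a : V) (q : seq V) : seq V := [:: a; last a q].

Definition int_disj (a : V) (q : seq V) (b : V) (r : seq V) : Prop :=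
  forall v, v \in a :: q -> v \in b :: r -> v \in ends a q /\ v \in ends b r.

End ShortestPathDAG.

(* The potential [d(s, .)] strictly increases along the arcs of D^+, so D^+ is
   acyclic and we may argue by induction on it.  By the minimality of
   [g(x, y^* )], [x] is a t-dominator of every [z] with [y^* ≺ z ≺ x]; but
   since [x ≺ I_t(y^* )], it is not a t-dominator of [y^*] itself.  So some
   [y^*]-[t] path avoids [x], and none of its vertices after [y^*] reaches [x].
   On the other hand no vertex other than [x] meets all [s]-[x] paths and all
   [y^*]-[x] paths: it would s-dominate [I_s(x) ≺ y^*] while being reachable
   from [y^*].  By Menger's theorem there are internally disjoint [s]-[x] and
   [y^*]-[x] paths, and together with the [y^*]-[t] path they are the three
   required paths. *)

From Pilot Require Import Defs.
From HB Require Import structures.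
From mathcomp Require Import boolp reals.
From mathcomp Require Import all_boot all_order all_algebra lra.
Import Order.TTheory GRing.Theory Num.Theory.
Local Open Scope ring_scope.

Set Implicit Arguments.
Unset Strict Implicit.
Unset Printing Implicit Defensive.

Lemma ex_argmin (I : finType) (disp : Order.disp_t) (T : orderType disp)
    (P : I -> Prop) (f : I -> T) i0 :
  P i0 -> exists2 i, P i & forall j, P j -> (f i <= f j)%O.
Proof.
move=> Pi0; case: (@arg_minP _ _ _ i0 (fun i => `[< P i >]) f) => [|i /asboolP Pi Hi].
  exact/asboolP.
by exists i => // j /asboolP; apply: Hi.
Qed.

Lemma ex_argmax (I : finType) (disp : Order.disp_t) (T : orderType disp)
    (P : I -> Prop) (f : I -> T) i0 :
  P i0 -> exists2 i, P i & forall j, P j -> (f j <= f i)%O.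
Proof.
move=> Pi0; case: (@arg_maxP _ _ _ i0 (fun i => `[< P i >]) f) => [|i /asboolP Pi Hi].
  exact/asboolP.
by exists i => // j /asboolP; apply: Hi.
Qed.

Section Distance.
Variables (R : realType) (V : finType) (E : rel V) (w : V -> V -> R).
Hypothesis HG : weighted_graph E w.

Local Notation d := (dist E w).
Local Notation wl := (wlen w).

Lemma wlen_cat x p q : wl x (p ++ q) = wl x p + wl (last x p) q.
Proof. by elim: p x => [|y p IH] x /=; rewrite ?add0r // IH addrA. Qed.

Lemma wlen_ge0 x p : path E x p -> 0 <= wl x p.
Proof.
case: HG => _ _ _ _ wpos.
elim: p x => [|y p IH] x //= /andP[Exy Hp].
by rewrite addr_ge0 ?IH // ltW ?wpos.
Qed.

Lemma walk_cat x y z p q : walk E x y p -> walk E y z q -> walk E x z (p ++ q).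
Proof. by move=> [Hp Hl] [Hq Hl']; rewrite /walk cat_path last_cat Hl Hp Hq. Qed.

Lemma dist_le_wlen x y p : walk E x y p -> d x y <= wl x p.
Proof.
move=> Hw; apply: ge_inf; last by exists p.
by exists 0 => r [q [[Hq _] ->]]; apply: wlen_ge0.
Qed.

Lemma lb_le_dist x y r : (forall p, walk E x y p -> r <= wl x p) -> r <= d x y.
Proof.
case: HG => _ _ conn _ _ Hr; apply: lb_le_inf => [|_ [p [Hp ->]]]; last exact: Hr.
have /connectP[p Hp Hl] := conn x y.
by exists (wl x p), p.
Qed.

Lemma dist_ge0 x y : 0 <= d x y.
Proof. by apply: lb_le_dist => p [Hp _]; apply: wlen_ge0. Qed.

Lemma dist_xx x : d x x = 0.
Proof. by apply/eqP; rewrite eq_le dist_ge0 andbT (@dist_le_wlen x x [::]). Qed.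

Lemma dist_triangle x y z : d x z <= d x y + d y z.
Proof.
rewrite -lerBlDr; apply: lb_le_dist => p Hp.
rewrite lerBlDl -lerBlDr; apply: lb_le_dist => q Hq.
rewrite lerBlDr (le_trans (dist_le_wlen (walk_cat Hp Hq))) //.
by rewrite wlen_cat (proj2 Hp) addrC.
Qed.

Lemma shortest_walk_prefix x y p1 p2 :
  walk E x y (p1 ++ p2) -> wl x (p1 ++ p2) = d x y ->
  wl x p1 = d x (last x p1).
Proof.
move=> [Hp Hl]; rewrite cat_path in Hp; case/andP: Hp => Hp1 Hp2.
rewrite wlen_cat => Hlen; apply/eqP; rewrite eq_le dist_le_wlen //=.
rewrite -(lerD2r (wl (last x p1) p2)) Hlen (le_trans (dist_triangle _ (last x p1) _)) //.
by rewrite lerD2l dist_le_wlen //; split; rewrite -?last_cat.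
Qed.

End Distance.

Section ShortestPathDag.
Variables (R : realType) (V : finType) (E : rel V) (w : V -> V -> R) (s t : V).
Hypothesis HG : weighted_graph E w.

Local Notation d := (dist E w).
Local Notation h := (dist E w s).
Local Notation arc := (Defs.arc E w s t).
Local Notation dw := (dwalk E w s t).
Local Notation dp := (dpath E w s t).
Local Notation prec := (prec E w s t).
Local Notation stpath := (stpath E w s t).

Lemma cat_cons_eq_cons (x u : V) p q1 r :
  q1 ++ u :: r = x :: p -> exists2 p1, p = p1 ++ r & last x p1 = u.
Proof.
case: q1 => [[-> <-]|y q1 [_ <-]]; first by exists [::].
by exists (rcons q1 u); rewrite ?cat_rcons ?last_rcons.
Qed.

Lemma arc_edge_dist u v : arc u v -> E u v /\ h v = h u + w u v.
Proof.
move=> [q1 [q2 [p [Hst Hw Hlen]]]].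
have [p1 Hp Hu] := cat_cons_eq_cons Hst; subst p.
split; first by case: Hw; rewrite cat_path Hu => /and3P[].
have := shortest_walk_prefix HG Hw Hlen; rewrite Hu => <-.
rewrite -cat_rcons in Hw Hlen.
have := shortest_walk_prefix HG Hw Hlen; rewrite last_rcons => <-.
by rewrite -cats1 wlen_cat Hu /= addr0.
Qed.

Lemma arc_lt u v : arc u v -> h u < h v.
Proof.
case: HG => _ _ _ _ wpos /arc_edge_dist[Euv ->].
by rewrite ltrDl wpos.
Qed.

Lemma dwalk_cat a p q : dw a (p ++ q) <-> dw a p /\ dw (last a p) q.
Proof.
elim: p a => [|b p IH] a /=; first by split => // [[]].
by rewrite IH; split => [[? []]|[[]]].
Qed.

Lemma dwalk_path a q : dw a q -> path E a q.
Proof.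
elim: q a => [|b q IH] a //= [/arc_edge_dist[Eab _] Hq].
by rewrite Eab IH.
Qed.

Lemma dwalk_lt a q v : dw a q -> v \in q -> h a < h v.
Proof.
elim: q a => [|b q IH] a //= [Hab Hq]; rewrite inE => /predU1P[->|Hv].
  exact: arc_lt.
exact: lt_trans (arc_lt Hab) (IH _ Hq Hv).
Qed.

Lemma dwalk_uniq a q : dw a q -> uniq (a :: q).
Proof.
elim: q a => [|b q IH] a // Hw; rewrite cons_uniq IH ?andbT; last by case: Hw.
by apply/negP => /(dwalk_lt Hw); rewrite ltxx.
Qed.

Lemma dwalk_wlen a q : dw a q -> wlen w a q = h (last a q) - h a.
Proof.
elim: q a => [|b q IH] a /=; first by rewrite subrr.
by move=> [/arc_edge_dist[_ Hb] /IH ->]; rewrite Hb; lra.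
Qed.

Lemma dpathE a b q : dp a b q <-> dw a q /\ last a q = b.
Proof. by split=> [[]|[Hw Hl]] //; split; rewrite ?dwalk_uniq. Qed.

Lemma dpath_cat a b c p q : dp a b p -> dp b c q -> dp a c (p ++ q).
Proof.
move=> /dpathE[Hp Hb] /dpathE[Hq Hc]; apply/dpathE.
by rewrite dwalk_cat last_cat Hb.
Qed.

Lemma dpath_split a b q v : dp a b q -> v \in a :: q ->
  exists q1 q2, [/\ q = q1 ++ q2, dp a v q1 & dp v b q2].
Proof.
move=> /dpathE[Hw Hl]; rewrite inE => /predU1P[->|Hv].
  by exists [::], q; split => //; apply/dpathE.
case/splitPr: Hv Hw Hl => q1 q2 Hw; rewrite last_cat /= => Hl.
move: Hw; rewrite -cat_rcons dwalk_cat last_rcons => -[Hw1 Hw2].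
by exists (rcons q1 v), q2; split; rewrite ?cat_rcons //; apply/dpathE; rewrite ?last_rcons.
Qed.

Definition reach a b := exists q, dp a b q.

Lemma reach_refl a : reach a a.
Proof. by exists [::]. Qed.

Lemma reach_trans a b c : reach a b -> reach b c -> reach a c.
Proof. by move=> [p Hp] [q Hq]; exists (p ++ q); apply: dpath_cat Hp Hq. Qed.

Lemma dpath_lt a b q : dp a b q -> q != [::] -> h a < h b.
Proof.
case: q => [//|c q] [Hw <- _] _.
by apply: (@dwalk_lt a (c :: q)) => //; apply: (mem_last c q).
Qed.

Lemma dpath_neq_nil a b q : dp a b q -> a != b -> q != [::].
Proof. by case=> _ Hl _; apply: contraNneq => q0; rewrite -Hl q0. Qed.

Lemma reach_lt a b : reach a b -> a != b -> h a < h b.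
Proof. by move=> [q Hq] Nab; apply: (dpath_lt Hq); apply: dpath_neq_nil Nab. Qed.

Lemma reach_le a b : reach a b -> h a <= h b.
Proof. by case: (eqVneq a b) => [-> //|Hab /reach_lt/(_ Hab)/ltW]. Qed.

Lemma reach_antisym a b : reach a b -> reach b a -> a = b.
Proof.
move=> Hab Hba; apply/eqP/negP => /negP Nab.
by have := reach_lt Hab Nab; rewrite ltNge reach_le.
Qed.

Lemma precE a b : prec a b <-> reach a b /\ a != b.
Proof.
split=> [[q [Hq Hp]]|[[q Hp] Nab]]; last by exists q; rewrite (dpath_neq_nil Hp).
by split; [exists q | apply: contraTneq (dpath_lt Hp Hq) => ->; rewrite ltxx].
Qed.

Lemma prec_lt a b : prec a b -> h a < h b.
Proof. by move=> /precE[Hab Nab]; apply: reach_lt. Qed.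

Lemma prec_reach a b : prec a b -> reach a b.
Proof. by case/precE. Qed.

Lemma prec_neq a b : prec a b -> a != b.
Proof. by case/precE. Qed.

Lemma reach_prec_trans a b c : reach a b -> prec b c -> prec a c.
Proof.
move=> Hab Hbc; apply/precE; split; first exact: reach_trans Hab (prec_reach Hbc).
by apply: contraTneq (le_lt_trans (reach_le Hab) (prec_lt Hbc)) => ->; rewrite ltxx.
Qed.

Lemma prec_trans a b c : prec a b -> prec b c -> prec a c.
Proof. by move/prec_reach; apply: reach_prec_trans. Qed.

Lemma on_dpath a b q v : dp a b q -> v \in a :: q -> reach a v /\ reach v b.
Proof. by move=> Hq /(dpath_split Hq)[q1 [q2 [_ H1 H2]]]; split; [exists q1 | exists q2]. Qed.

Lemma on_dpath_behead a b q v : dp a b q -> v \in q -> prec a v.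
Proof.
move=> Hq Hv; apply/precE; split; first by apply: (proj1 (on_dpath Hq _)); rewrite inE Hv orbT.
by case: Hq => Hw _ _; apply: contraTneq (dwalk_lt Hw Hv) => ->; rewrite ltxx.
Qed.

Lemma stpath_dwalk q1 a q : stpath (q1 ++ a :: q) -> dw a q.
Proof.
elim: q q1 a => [|b q IH] q1 a //= Hst; split; first by exists q1, q.
by apply: (IH (rcons q1 a)); rewrite cat_rcons.
Qed.

Lemma VD_reach v : VD E w s t v -> reach s v /\ reach v t.
Proof.
move=> [q1 [q2 Hst]]; have [p [Hsp [_ Hl] _]] := Hst.
have Hp : dp s t p.
  by apply/dpathE; split => //; rewrite Hsp in Hst; apply: (stpath_dwalk (q1 := [::])).
by apply: (on_dpath Hp); rewrite -Hsp mem_cat mem_head orbT.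
Qed.

Lemma reach_VD v : reach s v -> reach v t -> VD E w s t v.
Proof.
move=> [q1 Hq1] [q2 Hq2]; have /dpathE[Hw Hl] := dpath_cat Hq1 Hq2.
have Hst : stpath (s :: q1 ++ q2).
  exists (q1 ++ q2); split => //; first by split => //; apply: dwalk_path.
  by rewrite dwalk_wlen // Hl (dist_xx HG) subr0.
have Hv : v \in s :: q1 ++ q2.
  by rewrite -cat_cons mem_cat; case: Hq1 => _ <- _; rewrite mem_last.
by case/splitPr: Hv Hst => l1 l2 Hst; exists l1, l2.
Qed.

Lemma dist_le_reach a b : reach a b -> d a b <= h b - h a.
Proof.
move=> [q /dpathE[Hw Hl]]; rewrite -Hl -dwalk_wlen //.
by apply: (dist_le_wlen HG); split => //; apply: dwalk_path.
Qed.

Definition hrank v := #|[set u | h v < h u]|.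

Lemma hrank_lt a b : h a < h b -> (hrank b < hrank a)%N.
Proof.
move=> Hab; apply: proper_card; apply/properP; split.
  by apply/subsetP => u; rewrite !inE; apply: lt_trans.
by exists b; rewrite !inE ?ltxx.
Qed.

Lemma potential_ind (P : V -> Prop) :
  (forall a, (forall b, h a < h b -> P b) -> P a) -> forall a, P a.
Proof.
move=> IH a; have [n Hn] : exists n, hrank a = n by eexists.
elim/ltn_ind: n a Hn => n IHn a Hn; apply: IH => b /hrank_lt Hb.
by apply: (IHn (hrank b)); rewrite -?Hn.
Qed.

Lemma dist_lt_prec a b c : prec a b -> reach b c -> d b c < d a c.
Proof.
move=> Hab Hbc; have := dist_le_reach Hbc; have := dist_triangle HG s a c.
by have := prec_lt Hab; lra.
Qed.

Definition on_every_dpath a b z := forall q, dp a b q -> z \in a :: q.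

Definition common_cut a b x z :=
  [/\ z != x, on_every_dpath a x z & on_every_dpath b x z].

Lemma int_disj_sym (a : V) q b r : int_disj a q b r -> int_disj b r a q.
Proof. by move=> H v Hb Ha; have [] := H v Ha Hb. Qed.

Lemma fan_arc a b x qb : arc a x -> ~ reach b a -> dp b x qb ->
  [/\ dp a x [:: x], dp b x qb & int_disj a [:: x] b qb].
Proof.
move=> Hax Nba Hqb; split => //; first by apply/dpathE.
move=> v; rewrite !inE => /orP[/eqP->|/eqP->] Hv.
  by case: Nba; apply: (proj1 (on_dpath Hqb Hv)).
by case: Hqb => _ Hl _; rewrite Hl eqxx !orbT.
Qed.

Lemma fan_cons a a' b x qa qb : arc a a' -> ~ reach b a -> a' != b -> a' != x ->
  dp a' x qa -> dp b x qb -> int_disj a' qa b qb ->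
  [/\ dp a x (a' :: qa), dp b x qb & int_disj a (a' :: qa) b qb].
Proof.
move=> Haa' Nba Na'b Na'x Hqa Hqb Hd; split => //.
  by case/dpathE: Hqa => Hw Hl; apply/dpathE.
move=> v; rewrite inE => /predU1P[->|Hv] Hv'.
  by case: Nba; apply: (proj1 (on_dpath Hqb Hv')).
have [] := Hd v Hv Hv'; rewrite !inE => /predU1P[->|-> ->]; last by rewrite orbT.
by case: Hqb => _ -> _; rewrite (negbTE Na'b) (negbTE Na'x).
Qed.

(* The witness is a highest vertex cutting [b] from [x]. *)
Lemma fan_stuck a b x qb : a != x -> b != x -> ~ arc a x -> dp b x qb ->
  (forall a', arc a a' -> a' != b -> a' != x -> exists z, common_cut a' b x z) ->
  exists z, common_cut a b x z.
Proof.
move=> Nax Nbx Nax' Hqb Hsucc.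
have [zs [Nzsx Hzs] Hmax] := @ex_argmax V _ R
  (fun z => z != x /\ on_every_dpath b x z) h b (conj Nbx (fun q _ => mem_head b q)).
exists zs; split => // -[|a' q] Hq; first by case: Hq => _ /= Hl; rewrite Hl eqxx in Nax.
have /dpathE[[Haa' Hw] Hl] := Hq; have Hq' : dp a' x q by apply/dpathE.
have Na'x : a' != x by apply/eqP => Ea'x; apply: Nax'; rewrite -Ea'x.
have [Ea'b|Na'b] := eqVneq a' b; first by subst a'; rewrite inE (Hzs _ Hq') orbT.
have [z [Nzx Hza' Hzb]] := Hsucc a' Haa' Na'b Na'x.
have [q1 [q2 [Eq Hq1 Hq2]]] := dpath_split Hq' (Hza' _ Hq').
have [r1 [r2 [_ Hr1 _]]] := dpath_split Hqb (Hzb _ Hqb).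
have := Hzs _ (dpath_cat Hr1 Hq2); rewrite -cat_cons mem_cat => /orP[Hr|Hzs2].
  have [Ezs|Nzsz] := eqVneq zs z.
    by case: Hq1 => _ Hlz _; rewrite Eq Ezs -Hlz inE -cat_cons mem_cat mem_last orbT.
  by have := reach_lt (proj2 (on_dpath Hr1 Hr)) Nzsz; rewrite ltNge Hmax.
by rewrite Eq !inE mem_cat Hzs2 !orbT.
Qed.

(* Menger's theorem for two sources, by induction on their potentials: the
   source not reachable from the other one is advanced along an arc. *)
Lemma two_fan a b x : a != b -> a != x -> b != x -> (forall z, ~ common_cut a b x z) ->
  exists qa qb, [/\ dp a x qa, dp b x qb & int_disj a qa b qb].
Proof.
have [n Hn] : exists n, (hrank a + hrank b)%N = n by eexists.
elim/ltn_ind: n a b Hn => n IH a b Hn Nab Nax Nbx Hcut.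
wlog Nba : a b Hn Nab Nax Nbx Hcut / ~ reach b a.
  move=> W; case: (pselect (reach b a)) => Rba; last exact: W.
  have Nab' : ~ reach a b by move=> Rab; move/eqP: Nab; apply; apply: reach_antisym.
  have Hcut' z : ~ common_cut b a x z by case=> *; apply: (Hcut z).
  have Hn' : (hrank b + hrank a)%N = n by rewrite addnC.
  have Nba' : b != a by rewrite eq_sym.
  have [qb [qa [Hqb Hqa Hd]]] := W b a Hn' Nba' Nbx Nax Hcut' Nab'.
  by exists qa, qb; split => //; apply: int_disj_sym.
have [qb Hqb] : reach b x.
  apply: contrapT => Nbx'; apply: (Hcut a); split => // q Hq; last by case: Nbx'; exists q.
  exact: mem_head.
case: (pselect (arc a x)) => [Hax|Nax']; first by exists [:: x], qb; apply: fan_arc.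
case: (pselect (exists a', [/\ arc a a', a' != b, a' != x & forall z, ~ common_cut a' b x z]))
  => [[a' [Haa' Na'b Na'x Hcut']]|Nsucc].
  have Hlt : (hrank a' + hrank b < n)%N by rewrite -Hn ltn_add2r hrank_lt ?arc_lt.
  have [qa [qb' [Hqa Hqb' Hd]]] := IH _ Hlt a' b erefl Na'b Na'x Nbx Hcut'.
  by exists (a' :: qa), qb'; apply: fan_cons.
have [] := fan_stuck Nax Nbx Nax' Hqb => [a' Haa' Na'b Na'x|z /Hcut //].
by apply: contrapT => Nz; apply: Nsucc; exists a'; split => // z Hz; apply: Nz; exists z.
Qed.

Local Notation tdom := (Defs.tdom E w s t).

Lemma tdom_trans z k x : tdom z k -> tdom k x -> x != z -> tdom z x.
Proof.
move=> [_ Hk] [_ Hx] Nxz; split => // q Hq.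
have [q1 [q2 [Eq _ Hq2]]] := dpath_split Hq (Hk q Hq).
move: (Hx q2 Hq2); rewrite inE => /predU1P[->|Hx2]; first exact: Hk.
by rewrite Eq inE mem_cat Hx2 !orbT.
Qed.

(* [I_t(z)] is the t-dominator of [z] of least potential. *)
Lemma It_exists z : reach z t -> z != t -> exists k, It E w s t z k.
Proof.
move=> [P HP] Nzt.
have Ttz : tdom z t by split; [rewrite eq_sym | move=> q [_ <- _]; apply: mem_last].
have [k Hk Hmin] := @ex_argmin V _ R (tdom z) h t Ttz.
exists k; split => // v Hv Nvk; split => // q Hq.
have [P1 [P2 [_ HP1 _]]] := dpath_split HP (proj2 Hk P HP).
have := proj2 Hv _ (dpath_cat HP1 Hq); rewrite -cat_cons mem_cat => /orP[Hv1|Hvq].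
  by have := reach_lt (proj2 (on_dpath HP1 Hv1)) Nvk; rewrite ltNge Hmin.
by rewrite inE Hvq orbT.
Qed.

Section Valid.
Variables x y i j : V.
Hypotheses (HVx : VD E w s t x) (HVy : VD E w s t y).
Hypotheses (Hi : Is E w s t x i) (Hiy : prec i y) (Hyx : prec y x).
Hypotheses (Hj : It E w s t y j) (Hxj : prec x j).
Hypothesis Hmin : forall z, gfinite E w s t x z -> d y x <= d z x.

(* If [x ≺ I_t(z)] then [g(x, z) < g(x, y)]; otherwise [I_t(z)] lies between
   [z] and [x] and induction applies. *)
Lemma tdom_between z : prec y z -> prec z x -> tdom z x.
Proof.
elim/potential_ind: z => z IH Hyz Hzx.
have [_ Rxt] := VD_reach HVx.
have Rzt := reach_trans (prec_reach Hzx) Rxt.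
have Nzt : z != t.
  by apply: contraTneq (lt_le_trans (prec_lt Hzx) (reach_le Rxt)) => ->; rewrite ltxx.
have [k Hk] := It_exists Rzt Nzt; have Tzk := proj1 Hk.
case: (pselect (prec x k)) => [Hxk|Nxk].
  have Hgz : gfinite E w s t x z.
    split; last by exists k.
      by apply: reach_VD Rzt; apply: reach_trans (proj1 (VD_reach HVy)) (prec_reach Hyz).
    by exists i; split; [|split; [apply: prec_trans Hiy Hyz|]].
  by have := Hmin Hgz; rewrite leNgt dist_lt_prec //; apply: prec_reach.
have [P HP] := prec_reach Hzx; have [Q HQ] := Rxt.
have := proj2 Tzk _ (dpath_cat HP HQ); rewrite -cat_cons mem_cat.
case/orP=> [HkP|HkQ]; last by case: Nxk; apply: on_dpath_behead HQ HkQ.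
have [Rzk Rkx] := on_dpath HP HkP.
have [Ekx|Nkx] := eqVneq k x; first by rewrite -Ekx.
have Hzk : prec z k by apply/precE; split => //; rewrite eq_sym; case: Tzk.
have Hkx : prec k x by apply/precE.
apply: (tdom_trans Tzk (IH k (prec_lt Hzk) (prec_trans Hyz Hzk) Hkx)).
by rewrite eq_sym prec_neq.
Qed.

Lemma not_tdom_y : ~ tdom y x.
Proof.
move=> Tyx; have [Py HPy] := proj2 (VD_reach HVy).
have Tjx := proj2 Hj x Tyx (prec_neq Hxj).
have [Qj HQj] := proj2 (on_dpath HPy (proj2 (proj1 Hj) Py HPy)).
have Rjx := proj1 (on_dpath HQj (proj2 Tjx Qj HQj)).
by have := lt_le_trans (prec_lt Hxj) (reach_le Rjx); rewrite ltxx.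
Qed.

Lemma dpath_avoiding_x : exists2 Q, dp y t Q & x \notin y :: Q.
Proof.
apply: contrapT => NQ; apply: not_tdom_y; split; first by rewrite eq_sym prec_neq.
by move=> q Hq; apply: contrapT => /negP Nxq; apply: NQ; exists q.
Qed.

Lemma avoiding_not_reach Q v : dp y t Q -> x \notin y :: Q -> v \in Q -> ~ reach v x.
Proof.
move=> HQ NxQ HvQ Rvx.
have Nvx : v != x by apply: contraNneq NxQ => <-; rewrite inE HvQ orbT.
have Tvx := tdom_between (on_dpath_behead HQ HvQ) (proj2 (precE v x) (conj Rvx Nvx)).
have [q1 [q2 [EQ _ Hq2]]] := dpath_split HQ (mem_behead (s := y :: Q) HvQ).
move: (proj2 Tvx q2 Hq2); rewrite inE eq_sym (negbTE Nvx) /= => Hxq2.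
by move/negP: NxQ; apply; rewrite EQ inE mem_cat Hxq2 !orbT.
Qed.

Lemma reach_s_i : reach s i.
Proof.
have [[Px HPx] _] := VD_reach HVx.
exact: proj1 (on_dpath HPx (proj2 (proj1 Hi) Px HPx)).
Qed.

(* A common cut [z] would s-dominate [x], hence [I_s(x)]; as [y] reaches [z],
   this closes the cycle [y -> z -> I_s(x) -> y]. *)
Lemma no_common_cut z : ~ common_cut s y x z.
Proof.
move=> [Nzx Hsz Hyz]; have [Py HPy] := prec_reach Hyx.
have Ryz := proj1 (on_dpath HPy (Hyz Py HPy)).
have Rzi : reach z i.
  have [->|Nzi] := eqVneq z i; first exact: reach_refl.
  have [Pi HPi] := reach_s_i.
  exact: proj2 (on_dpath HPi (proj2 (proj2 Hi z (conj Nzx Hsz) Nzi) Pi HPi)).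
by have := prec_neq (reach_prec_trans (reach_trans Ryz Rzi) Hiy); rewrite eqxx.
Qed.

Lemma valid_pair : exists q1 q2 q3,
  [/\ dp s x q1, dp y x q2 & dp y t q3] /\
  [/\ int_disj s q1 y q2, int_disj s q1 y q3 & int_disj y q2 y q3].
Proof.
have Hsy : prec s y := reach_prec_trans reach_s_i Hiy.
have Nsx : s != x := prec_neq (prec_trans Hsy Hyx).
have [qa [qb [Hqa Hqb Hd]]] := two_fan (prec_neq Hsy) Nsx (prec_neq Hyx) no_common_cut.
have [Q HQ NxQ] := dpath_avoiding_x.
exists qa, qb, Q; split; split => // v Hv; rewrite inE => /predU1P[Evy|HvQ].
- rewrite Evy in Hv; have [] := Hd y Hv (mem_head y qb).
  rewrite /ends; case: Hqa => _ -> _; rewrite !inE eq_sym.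
  by rewrite (negbTE (prec_neq Hsy)) (negbTE (prec_neq Hyx)).
- by case: (avoiding_not_reach HQ NxQ HvQ); apply: (proj2 (on_dpath Hqa Hv)).
- by rewrite Evy !inE eqxx.
- by case: (avoiding_not_reach HQ NxQ HvQ); apply: (proj2 (on_dpath Hqb Hv)).
Qed.

End Valid.
End ShortestPathDag.

Theorem lemma6 (R : realType) (V : finType) (E : rel V) (w : V -> V -> R)
    (s t x ystar : V) :
  weighted_graph E w ->
  VD E w s t x -> x != s ->
  (* g^*(x) <> oo *)
  (exists y, gfinite E w s t x y) ->
  (* g(x, y^* ) = g^*(x) *)
  gfinite E w s t x ystar ->
  (forall y, gfinite E w s t x y -> dist E w ystar x <= dist E w y x) ->
  (* (x, y^* ) is valid *)
  exists q1 q2 q3,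
    [/\ dpath E w s t s x q1, dpath E w s t ystar x q2 &
        dpath E w s t ystar t q3] /\
    [/\ int_disj s q1 ystar q2, int_disj s q1 ystar q3 &
        int_disj ystar q2 ystar q3].
Proof.
(* [x != s] and [g^*(x) <> oo] are implied by the choice of [y^*]. *)
move=> HG HVx _ _ [HVy [i [Hi [Hiy Hyx]]] [j [Hj Hxj]]] Hmin.
exact: (valid_pair HG HVx HVy Hi Hiy Hyx Hj Hxj Hmin).
Qed.
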